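(* Let $M$ be a strong module of a CPT poset $\mathbf{P}=(X,P)$, and let $\{W_x\}_{x\in X}$ be a CPT representation of $\mathbf{P}$ on a host tree $T$ in which some element $z\in M$ is represented by a trivial path $W_z=\{a\}$, $a$ a vertex of $T$. If $x\in X\setminus M$ and $W_x$ contains the vertex $a$, then $W_x$ contains $W_m$ for every $m\in M$.
   Context: A CPT representation of a poset $\mathbf{P}=(X,P)$ assigns to each $x\in X$ a path $W_x$ (vertex set) of a host tree $T$ so that $x<y$ iff $W_x\subsetneq W_y$. A set $M\subseteq X$ is a module if every $y\notin M$ is comparable to all elements of $M$ or incomparable to all of them; it is strong if for every module $M'$, $M\cap M'=\emptyset$ or $M\subseteq M'$ or $M'\subseteq M$. A trivial path consists of a single vertex. *)

From mathcomp Require Import all_boot.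
Set Implicit Arguments. Unset Strict Implicit. Unset Printing Implicit Defensive.

Definition is_tree (V : finType) (e : rel V) : Prop :=
  [/\ symmetric e, irreflexive e,
      (forall u v : V, connect e u v) &
      (forall s : seq V, uniq s -> 3 <= size s -> ~~ cycle e s)].

Definition is_tree_path (V : finType) (e : rel V) (W : {set V}) : Prop :=
  exists (x : V) (p : seq V), [/\ uniq (x :: p), path e x p & W = [set y in x :: p]].

Definition strict_poset (X : finType) (lt : rel X) : Prop :=
  irreflexive lt /\ transitive lt.

Definition comparable (X : finType) (lt : rel X) (x y : X) : bool :=
  lt x y || lt y x.

Definition is_module (X : finType) (lt : rel X) (M : {set X}) : Prop :=
  forall y, y \notin M ->
    (forall m, m \in M -> comparable lt y m) \/
    (forall m, m \in M -> ~~ comparable lt y m).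

Definition is_strong_module (X : finType) (lt : rel X) (M : {set X}) : Prop :=
  is_module lt M /\
  forall M' : {set X}, is_module lt M' ->
    [disjoint M & M'] \/ M \subset M' \/ M' \subset M.

Definition is_CPT_rep (X V : finType) (lt : rel X) (e : rel V)
  (W : X -> {set V}) : Prop :=
  is_tree e /\
  (forall x, is_tree_path e (W x)) /\
  (forall x y, lt x y = (W x \proper W y)).

From Pilot Require Import Defs.
From mathcomp Require Import all_boot.

(* In a CPT representation [x < y] iff [W x] is a proper subpath of [W y];
   paths being nonempty, the trivial path [W z = {a}] makes [z] minimal, and
   [a \in W x] gives either [W x = {a}] or [z < x].  In the first case [x] and
   [z] are twins, so [{x, z}] is a module and the strong module [M] must be
   [{z}].  In the second case [x], comparable to [z \in M], is comparable to all
   of [M].  If some [m \in M] were above [x], the elements lying below every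
   element of [M] above [x] (and below [x] when in [M]) would form a module
   containing [x] and [z] but not [m], overlapping [M] without being comparable
   with it. *)

Section StrongModules.

Variables (X : finType) (lt : rel X).
Hypotheses (lt_irr : irreflexive lt) (lt_trans : transitive lt).

Local Notation cmp := (Defs.comparable lt).

Lemma twins_module (x z : X) :
  (forall y, cmp y x = cmp y z) -> is_module lt [set x; z].
Proof.
move=> twins y _; case/boolP: (cmp y z) => yz; [left | right] => m;
  by rewrite !inE => /orP[] /eqP ->; rewrite ?twins.
Qed.

Lemma strong_module_sub_twin (M : {set X}) (x z : X) :
  is_strong_module lt M -> z \in M -> x \notin M ->
  (forall y, cmp y x = cmp y z) -> M \subset [set z].
Proof.
move=> [_ strongM] zM xM twins.
have [disj | [sub | sub]] := strongM _ (twins_module _ _ twins).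
- by move: (disjointFr disj zM); rewrite !inE eqxx orbT.
- apply/subsetP => m mM; move/subsetP: sub => /(_ m mM).
  rewrite !inE => /orP[/eqP mx | //].
  by rewrite -mx mM in xM.
- by move/subsetP: sub => /(_ x); rewrite !inE eqxx (negbTE xM) => /(_ isT).
Qed.

Lemma module_comparable_out (M : {set X}) (x z : X) :
  is_module lt M -> x \notin M -> z \in M -> cmp x z -> {in M, forall m, cmp x m}.
Proof.
move=> modM xM zM xz m mM; have [all_cmp | no_cmp] := modM x xM; first exact: all_cmp.
by rewrite (negbTE (no_cmp z zM)) in xz.
Qed.

Definition below_upper (M : {set X}) (x : X) : {set X} :=
  [set v | [forall u in M, lt x u ==> lt v u] && ((v \in M) ==> lt v x)].

Section BelowUpper.

Variables (M : {set X}) (x z : X).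
Hypotheses (modM : is_module lt M) (zM : z \in M) (z_min : forall v, ~~ lt v z).
Hypotheses (x_cmpM : {in M, forall m, cmp x m}).

Local Notation N := (below_upper M x).

Lemma below_upper_module_in (y : X) :
  y \in M -> y \notin N -> {in N, forall n, cmp y n}.
Proof.
move=> yM yN n; rewrite inE => /andP[/forall_inP n_below _].
have xy : lt x y.
  have /orP[// | yx] := x_cmpM y yM.
  case/negP: yN; rewrite inE yM yx andbT.
  by apply/forall_inP => u _; apply/implyP; apply: lt_trans.
by rewrite /Defs.comparable (implyP (n_below y yM) xy) orbT.
Qed.

Lemma below_upper_module_out (y : X) : y \notin M -> y \notin N ->
  {in N, forall n, cmp y n} \/ {in N, forall n, ~~ cmp y n}.
Proof.
move=> yM yN.
have [u0 [u0M xu0 yu0]] : exists u0, [/\ u0 \in M, lt x u0 & ~~ lt y u0].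
  move: yN; rewrite inE (negbTE yM) andbT negb_forall_in => /existsP [u0].
  by rewrite negb_imply => /andP[u0M /andP[xu0 yu0]]; exists u0.
have [all_cmp | no_cmp] := modM y yM; [left | right] => n;
  rewrite inE => /andP[/forall_inP /(_ u0 u0M) /implyP /(_ xu0) nu0 _].
  have u0y : lt u0 y by move: (all_cmp u0 u0M); rewrite /Defs.comparable (negbTE yu0).
  by rewrite /Defs.comparable (lt_trans _ _ _ nu0 u0y) orbT.
rewrite /Defs.comparable negb_or; apply/andP; split.
  apply: contra (no_cmp u0 u0M) => yn.
  by rewrite /Defs.comparable (lt_trans _ _ _ yn nu0).
apply/negP => ny; case/boolP: (n \in M) => nM.
  by move: (no_cmp n nM); rewrite /Defs.comparable ny orbT.
have nu0_cmp : cmp n u0 by rewrite /Defs.comparable nu0.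
have := module_comparable_out _ _ _ modM nM u0M nu0_cmp z zM.
rewrite /Defs.comparable (negbTE (z_min n)) /= => zn.
by move: (no_cmp z zM); rewrite /Defs.comparable (lt_trans _ _ _ zn ny) orbT.
Qed.

Lemma below_upper_module : is_module lt N.
Proof.
move=> y yN; case/boolP: (y \in M) => yM.
  by left; apply: below_upper_module_in.
exact: below_upper_module_out.
Qed.

End BelowUpper.

Lemma strong_module_below (M : {set X}) (x z : X) :
  is_strong_module lt M -> z \in M -> (forall v, ~~ lt v z) ->
  x \notin M -> lt z x -> {in M, forall m, lt m x}.
Proof.
move=> [modM strongM] zM z_min xM zx m mM.
have x_cmpM : {in M, forall m, cmp x m}.
  by apply: (module_comparable_out _ _ _ modM xM zM); rewrite /Defs.comparable zx orbT.
have /orP[xm | //] := x_cmpM m mM; exfalso.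
have xN : x \in below_upper M x.
  by rewrite inE (negbTE xM) andbT; apply/forall_inP => u _; apply/implyP.
have zN : z \in below_upper M x.
  rewrite inE zM zx andbT; apply/forall_inP => u _; apply/implyP.
  exact: lt_trans zx.
have mN : m \notin below_upper M x.
  rewrite inE negb_and negb_forall_in; apply/orP; left; apply/existsP.
  by exists m; rewrite mM xm lt_irr.
have [disj | [sub | sub]] := strongM _ (below_upper_module _ _ _ modM zM z_min x_cmpM).
- by move: (disjointFr disj zM); rewrite zN.
- by move/subsetP: sub => /(_ m mM); rewrite (negbTE mN).
- by move/subsetP: sub => /(_ x xN); rewrite (negbTE xM).
Qed.

End StrongModules.

Lemma tree_path_neq0 (V : finType) (e : rel V) (W : {set V}) :
  is_tree_path e W -> W != set0.
Proof. by case=> v [p [_ _ ->]]; apply/set0Pn; exists v; rewrite inE mem_head. Qed.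

Lemma proper_set1 (T : finType) (A : {set T}) (a : T) :
  A != set0 -> ~~ (A \proper [set a]).
Proof. by move=> A0; rewrite properEneq subset1 (negbTE A0) orbF andNb. Qed.

Theorem mainTheorem4 (X V : finType) (lt : rel X) (e : rel V)
  (W : X -> {set V}) (M : {set X}) (z : X) (a : V) (x : X) :
  strict_poset lt ->
  is_strong_module lt M ->
  is_CPT_rep lt e W ->
  z \in M -> W z = [set a] ->
  x \notin M -> a \in W x ->
  forall m, m \in M -> W m \subset W x.
Proof.
move=> [lt_irr lt_trans] strongM [_ [pathW ltW]] zM Wz xM aWx m mM.
have z_min : forall v, ~~ lt v z.
  by move=> v; rewrite ltW Wz proper_set1 //; apply: tree_path_neq0 (pathW v).
have [Wx_a | Wx_neq_a] := eqVneq (W x) [set a].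
  have twins : forall y, Defs.comparable lt y x = Defs.comparable lt y z.
    by move=> y; rewrite /Defs.comparable !ltW Wx_a Wz.
  have := subsetP (strong_module_sub_twin _ _ _ _ _ strongM zM xM twins) m mM.
  by rewrite inE => /eqP ->; rewrite Wz Wx_a.
have zx : lt z x by rewrite ltW Wz properEneq eq_sym Wx_neq_a sub1set aWx.
have := strong_module_below _ _ lt_irr lt_trans _ _ _ strongM zM z_min xM zx m mM.
by rewrite ltW => /proper_sub.
Qed.
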